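(* Let $A$ be a circular $m\times n$ matrix, $b\in\mathbb{Z}_+^m$, $x^*\in Q(A,b)\setminus Q^*(A,b)$, and let $\Gamma$ be a circuit with negative cost in $D(A,x^* )$. Then $p(\Gamma)>0$.
   Context: Notation: $[n]=\{1,\dots,n\}$ with addition mod $n$ (index $0$ identified with $n$); for $a,c\in[n]$ with $t\ge0$ minimal such that $a+t\equiv c\pmod n$, $[a,c)_n=\{a,\dots,a+t-1\}$ (mod $n$). An $m\times n$ $\{0,1\}$-matrix $A$ is circular if for each row $i$ there are $\ell_i\in[n]$ and an integer $2\le k_i\le n-1$ with row $i$ the incidence vector of $[\ell_i,\ell_i+k_i)_n$. $Q(A,b)=\{x\ge0:Ax\ge b\}$, $Q^*(A,b)=\operatorname{conv}(Q(A,b)\cap\mathbb{Z}^n)$. $D(A)$: node set $[n]$ (labels mod $n$); forward arcs $a_i=(\ell_i-1,\ell_i+k_i-1)$ ($i\in[m]$, length $k_i$), $a_{m+j}=(j-1,j)$ ($j\in[n]$, length $1$); reverse arcs $\bar a_i=(\ell_i+k_i-1,\ell_i-1)$ (length $-k_i$), $\bar a_{m+j}=(j,j-1)$ (length $-1$). A circuit is a simple directed circuit; winding number $p(\Gamma)$: $p(\Gamma)n=\sum_{a\in E(\Gamma)}l(a)$. Costs: $\tilde A=\binom{A}{I}$, $d=\binom{b}{0}$, $v$ = last column of $\tilde A$; for $x^*\in Q(A,b)$: $s^*=\tilde Ax^*-d$, $\mu=\lceil\mathbf{1}^Tx^*\rceil-\mathbf{1}^Tx^*$, $c^+(x^* )=\mu(s^*-(1-\mu)v)$,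 $c^-(x^* )=(1-\mu)(s^*+\mu v)$. In $D(A,x^* )$ arc $a_k$ ($k\in[m+n]$) has cost $c^+_k(x^* )$ and $\bar a_k$ has cost $c^-_k(x^* )$; the cost of a circuit is the sum of its arc costs. *)

From HB Require Import structures.
From mathcomp Require Import all_boot all_order all_algebra.
From mathcomp Require Import reals.
Set Implicit Arguments. Unset Strict Implicit. Unset Printing Implicit Defensive.
Import Order.TTheory GRing.Theory Num.Theory.
Local Open Scope ring_scope.

(* Conventions (0-based): paper column c in [n] is column c-1 : 'I_n here;
   paper node t (mod n) is node (t mod n) in {0,..,n-1} here (paper node n = node 0).
   A row is given by l i = ell_i - 1 (0-based start column) and k i = k_i. *)

Definition in_interval (n l k j : nat) : bool := ((j + n - l) %% n < k)%N.

Definition circular_rep (R : realType) (m n : nat) (A : 'M[R]_(m, n))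
  (l : 'I_m -> 'I_n) (k : 'I_m -> nat) : Prop :=
  forall i : 'I_m, (2 <= k i <= n.-1)%N /\
    forall j : 'I_n, A i j = (in_interval n (l i) (k i) j)%:R.

Definition Qset (R : realType) (m n : nat) (A : 'M[R]_(m, n)) (b : 'I_m -> nat)
  (x : 'cV[R]_n) : Prop :=
  (forall j, 0 <= x j 0) /\ (forall i, (b i)%:R <= (A *m x) i 0).

Definition integral_vec (R : realType) (n : nat) (x : 'cV[R]_n) : Prop :=
  forall j, x j 0 \is a Num.int.

Definition conv_hull (R : realType) (n : nat) (S : 'cV[R]_n -> Prop) (x : 'cV[R]_n) : Prop :=
  exists (r : nat) (p : 'I_r -> 'cV[R]_n) (lam : 'I_r -> R),
    [/\ forall t, S (p t), forall t, 0 <= lam t, \sum_t lam t = 1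
      & x = \sum_t lam t *: p t].

Definition Qstar (R : realType) (m n : nat) (A : 'M[R]_(m, n)) (b : 'I_m -> nat)
  (x : 'cV[R]_n) : Prop :=
  conv_hull (fun y => Qset A b y /\ integral_vec y) x.

(* Arc indices [m+n]: inl i = index i (row of A), inr j = index m+j+1 (identity row).
   An arc of D(A) is an index together with a direction (true = forward a_k,
   false = reverse \bar a_k). *)
Definition darc (m n : nat) := (('I_m + 'I_n) * bool)%type.

Section ArcData.
Variables (m n : nat) (l : 'I_m -> 'I_n) (k : 'I_m -> nat).

Definition fwd_tail (a : 'I_m + 'I_n) : nat :=
  match a with inl i => l i | inr j => j end.
Definition fwd_head (a : 'I_m + 'I_n) : nat :=
  match a with inl i => ((l i + k i) %% n)%N | inr j => (j.+1 %% n)%N end.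
Definition fwd_len (a : 'I_m + 'I_n) : int :=
  match a with inl i => (k i)%:Z | inr _ => 1 end.

Definition arc_tail (e : darc m n) : nat :=
  if e.2 then fwd_tail e.1 else fwd_head e.1.
Definition arc_head (e : darc m n) : nat :=
  if e.2 then fwd_head e.1 else fwd_tail e.1.
Definition arc_len (e : darc m n) : int :=
  if e.2 then fwd_len e.1 else - fwd_len e.1.

(* simple directed circuit: nonempty cyclic sequence of consecutive arcs
   with pairwise distinct tails (hence distinct nodes and arcs) *)
Definition is_circuit (c : seq (darc m n)) : bool :=
  [&& c != [::],
      cycle (fun e1 e2 => arc_head e1 == arc_tail e2) c
    & uniq (map arc_tail c)].

Definition winding (R : realType) (c : seq (darc m n)) : R :=
  (\sum_(e <- c) arc_len e)%:~R / n%:R.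
End ArcData.

Section Costs.
Variables (R : realType) (m n : nat) (A : 'M[R]_(m, n)) (b : 'I_m -> nat) (x : 'cV[R]_n).

Definition tildeA (a : 'I_m + 'I_n) (j : 'I_n) : R :=
  match a with inl i => A i j | inr j' => (j' == j)%:R end.
Definition dvec (a : 'I_m + 'I_n) : R :=
  match a with inl i => (b i)%:R | inr _ => 0 end.
(* v = last column (column n) of \tilde A *)
Definition vlast (a : 'I_m + 'I_n) : R :=
  \sum_(j < n | (j : nat) == n.-1) tildeA a j.
Definition sstar (a : 'I_m + 'I_n) : R := \sum_j tildeA a j * x j 0 - dvec a.
Definition mu : R := let t := \sum_j x j 0 in (Num.ceil t)%:~R - t.
Definition cplus (a : 'I_m + 'I_n) : R := mu * (sstar a - (1 - mu) * vlast a).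
Definition cminus (a : 'I_m + 'I_n) : R := (1 - mu) * (sstar a + mu * vlast a).
Definition arc_cost (e : darc m n) : R := if e.2 then cplus e.1 else cminus e.1.
Definition circuit_cost (c : seq (darc m n)) : R := \sum_(e <- c) arc_cost e.
End Costs.

From HB Require Import structures.
From mathcomp Require Import all_boot all_order all_algebra.
From mathcomp Require Import reals.
From mathcomp Require Import zify lra.
Set Implicit Arguments. Unset Strict Implicit. Unset Printing Implicit Defensive.
Import Order.TTheory GRing.Theory Num.Theory.
Local Open Scope ring_scope.

(* Every arc e of D(A) satisfies  l(e) = head e - tail e + sign(e) v_e n  (nodes
   read in {0,..,n-1}), where v_e in {0,1} is the entry of the last column of
   ~A in the row of e: v_e = 1 exactly when the forward arc steps over node 0.
   Around any closed walk heads and tails cancel, so p(Gamma) = sum_e sign(e) v_e.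
   Since s* >= 0 and 0 <= mu < 1, the costs obey
     c^+_e = mu (s*_e - (1 - mu) v_e) >= - mu (1 - mu) v_e,
     c^-_e = (1 - mu) (s*_e + mu v_e) >= mu (1 - mu) v_e,
   hence cost(Gamma) >= - mu (1 - mu) p(Gamma), and a negative cost forces
   p(Gamma) > 0. *)

Lemma path_map_rcons (T U : eqType) (f g : T -> U) (x y : T) (s : seq T) :
  path (fun e1 e2 => f e1 == g e2) x (rcons s y) -> map f (x :: s) = map g (rcons s y).
Proof.
elim: s x => [|z s IH] x /=; first by rewrite andbT => /eqP ->.
by case/andP=> /eqP -> /IH /= ->.
Qed.

Lemma cycle_perm_map (T U : eqType) (f g : T -> U) (s : seq T) :
  cycle (fun e1 e2 => f e1 == g e2) s -> perm_eq (map f s) (map g s).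
Proof. by case: s => // x s /path_map_rcons ->; rewrite perm_map // perm_rcons. Qed.

Section Winding.
Variables (m n : nat) (l : 'I_m -> 'I_n) (k : 'I_m -> nat).
Hypothesis k_le_n : forall i, (k i <= n)%N.

Definition fwd_lenn (a : 'I_m + 'I_n) : nat :=
  match a with inl i => k i | inr _ => 1 end.

Definition wraps (a : 'I_m + 'I_n) : bool := (n <= fwd_tail l a + fwd_lenn a)%N.

Definition arc_sign (e : darc m n) : int := if e.2 then 1 else -1.

Lemma fwd_lenE a : fwd_len k a = (fwd_lenn a)%:Z.
Proof. by case: a. Qed.

Lemma fwd_tailD_len a :
  (fwd_tail l a + fwd_lenn a = fwd_head l k a + wraps a * n)%N.
Proof.
rewrite /wraps; case: a => [i|j] /=.
  have := k_le_n i; have := ltn_ord (l i).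
  case: (leqP n (l i + k i)) => wr li ki.
    by rewrite -(subnK wr) modnDr modn_small; lia.
  by rewrite modn_small; lia.
have := ltn_ord j; case: (leqP n (j + 1)) => wr jn.
  by rewrite (_ : j.+1 = n) ?modnn; lia.
by rewrite modn_small; lia.
Qed.

Lemma arc_lenE e :
  arc_len k e = (arc_head l k e)%:Z - (arc_tail l k e)%:Z + arc_sign e * (wraps e.1 * n)%:Z.
Proof.
have := fwd_tailD_len e.1.
by rewrite /arc_head /arc_tail /arc_len /arc_sign fwd_lenE; case: e.2 => /=; lia.
Qed.

Lemma sum_arc_len_cycle (c : seq (darc m n)) :
  cycle (fun e1 e2 => arc_head l k e1 == arc_tail l k e2) c ->
  \sum_(e <- c) arc_len k e = (\sum_(e <- c) arc_sign e * (wraps e.1)%:Z) * n%:Z.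
Proof.
move=> /cycle_perm_map heads_tails.
have sum_heads : \sum_(e <- c) (arc_head l k e)%:Z = \sum_(e <- c) (arc_tail l k e)%:Z.
  rewrite -(big_map (arc_head l k) xpredT (fun t => t%:Z)).
  by rewrite -(big_map (arc_tail l k) xpredT (fun t => t%:Z)); exact: perm_big.
rewrite (eq_bigr _ (fun e _ => arc_lenE e)) !big_split /= sumrN sum_heads mulr_suml.
by rewrite subrr add0r; apply: eq_bigr => e _; rewrite PoszM mulrA.
Qed.

Lemma winding_cycleE (R : realType) (c : seq (darc m n)) :
  cycle (fun e1 e2 => arc_head l k e1 == arc_tail l k e2) c ->
  winding k R c = \sum_(e <- c) (arc_sign e)%:~R * (wraps e.1)%:R.
Proof.
case: c => [|e s] closed; first by rewrite /winding !big_nil mul0r.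
have n_gt0 : (0 < n)%N by case: e {closed} => [[i|j] _] /=; [case: (l i) | case: j]; lia.
rewrite /winding sum_arc_len_cycle // rmorphM rmorph_sum /= mulfK ?pnatr_eq0 -?lt0n //.
by apply: eq_bigr => f _; rewrite rmorphM.
Qed.

End Winding.

Section Costs.
Variables (R : realType) (m n : nat) (A : 'M[R]_(m, n)) (b : 'I_m -> nat) (x : 'cV[R]_n).

Lemma vlast_wraps (l : 'I_m -> 'I_n) (k : 'I_m -> nat) a :
  circular_rep A l k -> vlast A a = (wraps l k a)%:R.
Proof.
move=> circ; have n_gt0 : (0 < n)%N by case: a => [i|j]; [case: (l i) | case: j]; lia.
have last_lt : (n.-1 < n)%N by rewrite prednK.
rewrite /vlast (big_pred1 (Ordinal last_lt)) /=; last by move=> j; rewrite /eq_op.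
rewrite /wraps; case: a => [i|j] /=.
  have [_ ->] := circ i; congr (_%:R); rewrite /in_interval /=.
  have li := ltn_ord (l i).
  by rewrite (_ : n.-1 + n - l i = n.-1 - l i + n)%N ?modnDr ?modn_small; lia.
by congr (_%:R); rewrite -val_eqE /=; have := ltn_ord j; lia.
Qed.

Lemma mu_ge0 : 0 <= mu x.
Proof. by rewrite /mu subr_ge0 ceil_ge. Qed.

Lemma mu_lt1 : mu x < 1.
Proof. by rewrite /mu; have /andP[+ _] := ceil_itv (\sum_j x j 0); rewrite intrD; lra. Qed.

Lemma sstar_ge0 a : Qset A b x -> 0 <= sstar A b x a.
Proof.
move=> [x_ge0 Ax_ge_b]; rewrite /sstar; case: a => [i|j] /=.
  by rewrite subr_ge0; have := Ax_ge_b i; rewrite mxE.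
rewrite (bigD1 j) //= eqxx mul1r big1 ?subr0 ?addr0 // => j' /negbTE.
by rewrite eq_sym => ->; rewrite mul0r.
Qed.

Lemma arc_cost_ge (e : darc m n) :
  0 <= sstar A b x e.1 -> 0 <= vlast A e.1 ->
  - (mu x * (1 - mu x)) * ((arc_sign e)%:~R * vlast A e.1) <= arc_cost A b x e.
Proof.
have := mu_ge0; have := mu_lt1.
by rewrite /arc_cost /cplus /cminus /arc_sign; case: e.2 => /= *; nra.
Qed.

Lemma circuit_cost_ge (l : 'I_m -> 'I_n) (k : 'I_m -> nat) (c : seq (darc m n)) :
  circular_rep A l k -> Qset A b x ->
  cycle (fun e1 e2 => arc_head l k e1 == arc_tail l k e2) c ->
  - (mu x * (1 - mu x)) * winding k R c <= circuit_cost A b x c.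
Proof.
move=> circ Qx closed.
have k_le_n i : (k i <= n)%N by have [/andP[_]] := circ i; lia.
rewrite (winding_cycleE k_le_n R closed) mulr_sumr; apply: ler_sum => e _.
rewrite -(vlast_wraps _ circ); apply: arc_cost_ge; first exact: sstar_ge0.
by rewrite (vlast_wraps _ circ) ler0n.
Qed.

End Costs.

Theorem lemma4p3 (R : realType) (m n : nat) (A : 'M[R]_(m, n))
  (l : 'I_m -> 'I_n) (k : 'I_m -> nat) (b : 'I_m -> nat) (x : 'cV[R]_n)
  (c : seq (darc m n)) :
  circular_rep A l k ->
  Qset A b x -> ~ Qstar A b x ->
  is_circuit l k c ->
  circuit_cost A b x c < 0 ->
  0 < winding k R c.
Proof.
move=> circ Qx _ /and3P[_ closed _] cost_lt0.
have cost_ge := circuit_cost_ge circ Qx closed.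
have mu1mu_ge0 : 0 <= mu x * (1 - mu x).
  by apply: mulr_ge0; [exact: mu_ge0 | rewrite subr_ge0 ltW // mu_lt1].
rewrite ltNge; apply/negP => winding_le0.
have : 0 <= - (mu x * (1 - mu x)) * winding k R c.
  by rewrite mulNr -mulrN mulr_ge0 // oppr_ge0.
lra.
Qed.
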